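(* Let $\mathscr{H}$ be a complex Hilbert space and let $N(\cdot)$ be a norm on $\mathbb{B}(\mathscr{H})$. Then the function $w_{(N,e)}(\cdot,\cdot):\mathbb{B}^2(\mathscr{H})\to[0,\infty)$ defined by $$w_{(N,e)}(B,C)=\sup_{\lambda_1,\lambda_2\in\mathbb{C},\ |\lambda_1|^2+|\lambda_2|^2\leq 1}\ \sup_{\theta\in\mathbb{R}} N\left(\Re\left(e^{i\theta}(\lambda_1B+\lambda_2C)\right)\right)$$ is a norm on $\mathbb{B}^2(\mathscr{H})=\mathbb{B}(\mathscr{H})\times\mathbb{B}(\mathscr{H})$ (with componentwise addition and scalar multiplication).
   Context: $\mathbb{B}(\mathscr{H})$ denotes the algebra of bounded linear operators on $\mathscr{H}$. For $T\in\mathbb{B}(\mathscr{H})$, $\Re(T)=\frac12(T+T^* )$. *)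

From HB Require Import structures.
From Stdlib Require Import ClassicalEpsilon.
From mathcomp Require Import all_boot all_order all_algebra.
From mathcomp Require Import all_classical all_reals.
From mathcomp Require Import trigo.
From mathcomp Require Import complex.

Set Implicit Arguments.
Unset Strict Implicit.
Unset Printing Implicit Defensive.
Import Order.TTheory GRing.Theory Num.Theory.
Local Open Scope ring_scope.
Local Open Scope classical_set_scope.

Definition cabs (R : realType) (z : R[i]) : R := ComplexField.Normc.normc z.

Section Hilbert.
Variables (R : realType) (V : lmodType R[i]) (ip : V -> V -> R[i]).

Definition hnorm (x : V) : R := Num.sqrt (complex.Re (ip x x)).

Record is_hilbert : Prop := {
  ip_linear : forall (a : R[i]) (x y z : V), ip (a *: x + y) z = a * ip x z + ip y z;
  ip_conj : forall x y : V, ip y x = conjc (ip x y);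
  ip_pos : forall x : V, 0 <= ip x x;
  ip_def : forall x : V, ip x x = 0 -> x = 0;
  ip_complete : forall u : nat -> V,
    (forall e : R, 0 < e -> exists N : nat, forall m n : nat,
        (N <= m)%N -> (N <= n)%N -> hnorm (u m - u n) < e) ->
    exists l : V, forall e : R, 0 < e -> exists N : nat, forall n : nat,
        (N <= n)%N -> hnorm (u n - l) < e }.

Definition bounded_linear (T : V -> V) : Prop :=
  (forall (a : R[i]) (x y : V), T (a *: x + y) = a *: T x + T y) /\
  (exists M : R, forall x : V, hnorm (T x) <= M * hnorm x).

Definition opadd (T S : V -> V) : V -> V := fun x => T x + S x.
Definition opscale (a : R[i]) (T : V -> V) : V -> V := fun x => a *: T x.
Definition opzero : V -> V := fun _ => 0.

Definition adjoint (T : V -> V) : V -> V :=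
  epsilon (inhabits T) (fun S : V -> V => forall x y : V, ip (T x) y = ip x (S y)).

Definition ReOp (T : V -> V) : V -> V :=
  opscale (2^-1) (opadd T (adjoint T)).

Definition is_norm_BH (N : (V -> V) -> R) : Prop :=
  [/\ (forall T, bounded_linear T -> 0 <= N T),
      (forall T, bounded_linear T -> N T = 0 -> T = opzero),
      (forall a T, bounded_linear T -> N (opscale a T) = cabs a * N T)
    & (forall T S, bounded_linear T -> bounded_linear S ->
          N (opadd T S) <= N T + N S)].

Definition expi (t : R) : R[i] := Complex (cos t) (sin t).

Definition theta_set (N : (V -> V) -> R) (l1 l2 : R[i]) (B C : V -> V) : set R :=
  [set N (ReOp (opscale (expi t) (opadd (opscale l1 B) (opscale l2 C)))) | t in [set: R]].

Definition lambda_set (N : (V -> V) -> R) (B C : V -> V) : set R :=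
  [set r | exists l1 l2 : R[i],
     cabs l1 ^+ 2 + cabs l2 ^+ 2 <= 1 /\ r = sup (theta_set N l1 l2 B C)].

Definition wNe (N : (V -> V) -> R) (B C : V -> V) : R := sup (lambda_set N B C).

Definition is_norm_BH2 (N : (V -> V) -> R) (w : (V -> V) -> (V -> V) -> R) : Prop :=
  [/\ (forall B C, bounded_linear B -> bounded_linear C -> 0 <= w B C),
      (forall B C, bounded_linear B -> bounded_linear C -> w B C = 0 ->
          B = opzero /\ C = opzero),
      (forall a B C, bounded_linear B -> bounded_linear C ->
          w (opscale a B) (opscale a C) = cabs a * w B C)
    & (forall B1 C1 B2 C2, bounded_linear B1 -> bounded_linear C1 ->
          bounded_linear B2 -> bounded_linear C2 ->
          w (opadd B1 B2) (opadd C1 C2) <= w B1 C1 + w B2 C2)].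

End Hilbert.

(* Each map (B, C) |-> N (Re (e^(i t) (l1 B + l2 C))) with |l1|^2 + |l2|^2 <= 1
   is a seminorm on pairs of bounded operators, bounded by a multiple of
   N B + N C + N B^* + N C^*, so w is a finite supremum of seminorms.
   Homogeneity for complex a follows from a = |a| u with |u| = 1, the factor u
   being absorbed into (l1, l2); definiteness follows from (l1, l2) = (1, 0),
   (0, 1) and t = 0, pi/2, since Re T = Re (i T) = 0 forces T = 0.
   All of this needs the adjoint of a bounded operator to exist, and hence to be
   bounded, additive and conjugate-homogeneous.  Existence is the Riesz
   representation theorem, proved from completeness: a norm-minimising sequence
   on the affine hyperplane {f = 1} is Cauchy by the parallelogram law, its limit
   l is orthogonal to ker f, and f x = <x, l / |l|^2>. *)

From Stdlib Require Import ClassicalEpsilon.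
From mathcomp Require Import all_boot all_order all_algebra.
From mathcomp Require Import all_classical all_reals.
From mathcomp Require Import trigo complex.
From mathcomp Require Import ring lra.
Import Order.TTheory GRing.Theory Num.Theory.
Local Open Scope ring_scope.
Local Open Scope classical_set_scope.
Local Open Scope complex_scope.
Set Implicit Arguments.
Unset Strict Implicit.
Unset Printing Implicit Defensive.

Local Notation Re := (@complex.Re _).
Local Notation Im := (@complex.Im _).
(* In [ring_scope], [^*] would be [Num.conj], which the [conjc] lemmas do not match. *)
Local Notation "z ^*" := (conjc z) : ring_scope.

Section ComplexModulus.
Variable R : realType.
Implicit Types (z u : R[i]) (r t : R).

Definition sqcabs z := Re z ^+ 2 + Im z ^+ 2.

Lemma complex_ext z u : Re z = Re u -> Im z = Im u -> z = u.
Proof. by case: z u => a b [c d] /= -> ->. Qed.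

Lemma sqcabs_ge0 z : 0 <= sqcabs z.
Proof. by rewrite addr_ge0 ?sqr_ge0. Qed.

Lemma cabsE z : cabs z = Num.sqrt (sqcabs z).
Proof. by case: z. Qed.

Lemma cabs_ge0 z : 0 <= cabs z.
Proof. by rewrite cabsE sqrtr_ge0. Qed.

Lemma sqr_cabs z : cabs z ^+ 2 = sqcabs z.
Proof. by rewrite cabsE sqr_sqrtr ?sqcabs_ge0. Qed.

Lemma cabs_eq0 z : cabs z = 0 -> z = 0.
Proof. exact: ComplexField.Normc.eq0_normc. Qed.

Lemma sqcabs_eq0 z : sqcabs z = 0 -> z = 0.
Proof. by move=> z0; apply: cabs_eq0; rewrite cabsE z0 sqrtr0. Qed.

Lemma cabs0 : cabs (0 : R[i]) = 0.
Proof. exact: ComplexField.Normc.normc0. Qed.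

Lemma cabs1 : cabs (1 : R[i]) = 1.
Proof. exact: ComplexField.Normc.normc1. Qed.

Lemma cabsM z u : cabs (z * u) = cabs z * cabs u.
Proof. exact: ComplexField.Normc.normcM. Qed.

Lemma cabsV z : cabs z^-1 = (cabs z)^-1.
Proof. exact: ComplexField.Normc.normcV. Qed.

Lemma cabs_conj z : cabs z^* = cabs z.
Proof. by rewrite !cabsE /sqcabs; case: z => a b /=; rewrite sqrrN. Qed.

Lemma cabs_real r : 0 <= r -> cabs r%:C = r.
Proof. by move=> r0; rewrite cabsE /sqcabs /= expr0n addr0 sqrtr_sqr ger0_norm. Qed.

Lemma cabs_expi t : cabs (expi t) = 1.
Proof. by rewrite cabsE /sqcabs /= cos2Dsin2 sqrtr1. Qed.

Lemma Re_le_cabs z : Re z <= cabs z.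
Proof.
have := cabs_ge0 z; have := sqr_cabs z; rewrite /sqcabs.
have := sqr_ge0 (Im z); nra.
Qed.

Lemma polar_decomp z : exists2 u, cabs u = 1 & z = (cabs z)%:C * u.
Proof.
have [->|z0] := eqVneq z 0; first by exists 1; rewrite ?cabs1 // mulr1 cabs0.
have r0 : cabs z != 0 by apply: contra_neq z0 => /cabs_eq0.
have rC0 : (cabs z)%:C != 0 by apply: contra_neq r0 => /(congr1 Re).
exists (z / (cabs z)%:C); last by rewrite mulrC divfK.
by rewrite cabsM cabsV cabs_real ?cabs_ge0 // mulfV.
Qed.

Lemma cabs_ball_le1 z u : cabs z ^+ 2 + cabs u ^+ 2 <= 1 -> cabs z <= 1 /\ cabs u <= 1.
Proof. by move=> h; have := cabs_ge0 z; have := cabs_ge0 u; split; nra. Qed.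

End ComplexModulus.

Lemma ler_add_mul_small (R : realFieldType) (x y C : R) : 0 < C ->
  (forall e, 0 < e -> e <= 1 -> x <= y + C * e) -> x <= y.
Proof.
move=> C0 small; apply/ler_addgt0Pr => e e0.
pose m := Num.min (C^-1 * e) 1.
have m0 : 0 < m by rewrite lt_min ltr01 mulr_gt0 ?invr_gt0.
have m1 : m <= 1 by rewrite ge_min lexx orbT.
have Cm : C * m <= e by rewrite -ler_pdivlMl // ge_min lexx.
by apply: le_trans (small m m0 m1) _; rewrite lerD2l.
Qed.

Section InnerProduct.
Variables (R : realType) (V : lmodType R[i]) (ip : V -> V -> R[i]).
Hypothesis ipH : is_hilbert ip.
Local Notation hnorm := (hnorm ip).
Implicit Types (x y z : V) (a t : R[i]).

Lemma ipDl x y z : ip (x + y) z = ip x z + ip y z.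
Proof. by have := ip_linear ipH 1 x y z; rewrite scale1r mul1r. Qed.

Lemma ip0l z : ip 0 z = 0.
Proof. by apply: (addrI (ip 0 z)); rewrite addr0 -ipDl addr0. Qed.

Lemma ipZl a x z : ip (a *: x) z = a * ip x z.
Proof. by have := ip_linear ipH a x 0 z; rewrite !addr0 ip0l addr0. Qed.

Lemma ipBl x y z : ip (x - y) z = ip x z - ip y z.
Proof. by rewrite ipDl -scaleN1r ipZl mulN1r. Qed.

Lemma ipC x y : ip y x = (ip x y)^*.
Proof. exact: (ip_conj ipH). Qed.

Lemma ipDr x y z : ip z (x + y) = ip z x + ip z y.
Proof. by rewrite ipC ipDl rmorphD /= -!ipC. Qed.

Lemma ipZr a x z : ip z (a *: x) = a^* * ip z x.
Proof. by rewrite ipC ipZl rmorphM /= -!ipC. Qed.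

Lemma ip0r z : ip z 0 = 0.
Proof. by rewrite ipC ip0l conjc0. Qed.

Lemma ipBr x y z : ip z (x - y) = ip z x - ip z y.
Proof. by rewrite ipC ipBl rmorphB /= -!ipC. Qed.

Lemma ip_ext x y : (forall z, ip z x = ip z y) -> x = y.
Proof.
move=> eq_xy; apply/eqP; rewrite -subr_eq0; apply/eqP/(ip_def ipH).
by rewrite ipBr eq_xy subrr.
Qed.

Definition hnorm2 x := Re (ip x x).

Lemma ip_self x : ip x x = (hnorm2 x)%:C.
Proof.
rewrite /hnorm2; have := ip_pos ipH x.
by case: (ip x x) => a b; rewrite lecE /= => /andP[/eqP ->].
Qed.

Lemma hnorm2_ge0 x : 0 <= hnorm2 x.
Proof. by have := ip_pos ipH x; rewrite /hnorm2 lecE => /andP[]. Qed.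

Lemma hnorm2_eq0 x : hnorm2 x = 0 -> x = 0.
Proof. by move=> x0; apply: (ip_def ipH); rewrite ip_self x0. Qed.

Lemma hnorm_ge0 x : 0 <= hnorm x.
Proof. exact: sqrtr_ge0. Qed.

Lemma sqr_hnorm x : hnorm x ^+ 2 = hnorm2 x.
Proof. by rewrite sqr_sqrtr // hnorm2_ge0. Qed.

Lemma hnorm2D x y : hnorm2 (x + y) = hnorm2 x + hnorm2 y + 2 * Re (ip x y).
Proof.
rewrite /hnorm2 ipDl !ipDr (ipC x y) !ip_self.
by case: (ip x y) => c1 c2 /=; ring.
Qed.

Lemma hnorm2Z a x : hnorm2 (a *: x) = sqcabs a * hnorm2 x.
Proof. by rewrite /hnorm2 ipZl ipZr ip_self; case: a => a1 a2 /=; rewrite /sqcabs /=; ring. Qed.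

Lemma hnorm2_subZ x y t :
  hnorm2 (x - t *: y) = hnorm2 x - 2 * Re (t^* * ip x y) + sqcabs t * hnorm2 y.
Proof.
rewrite /hnorm2 ipBl !ipBr !ipZl !ipZr (ipC x y) !ip_self.
by case: (ip x y) => c1 c2; case: t => t1 t2; rewrite /sqcabs /=; ring.
Qed.

Lemma hnorm2_sub_proj x y (s : R) : hnorm2 (x - (s%:C * ip x y) *: y) =
  hnorm2 x - 2 * s * sqcabs (ip x y) + s ^+ 2 * sqcabs (ip x y) * hnorm2 y.
Proof. by rewrite hnorm2_subZ; case: (ip x y) => c1 c2; rewrite /sqcabs /=; ring. Qed.

Lemma parallelogram x y :
  hnorm2 (x + y) + hnorm2 (x - y) = 2 * hnorm2 x + 2 * hnorm2 y.
Proof.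
rewrite hnorm2D -[y in x - y]scale1r hnorm2_subZ conjc1 mul1r.
by rewrite /sqcabs /= expr0n /= addr0 expr1n mul1r; ring.
Qed.

Lemma CauchySchwarz x y : sqcabs (ip x y) <= hnorm2 x * hnorm2 y.
Proof.
have [y0|ny0] := eqVneq (hnorm2 y) 0.
  by rewrite y0 mulr0 (hnorm2_eq0 y0) ip0r /sqcabs /= expr0n addr0.
have ny_gt0 : 0 < hnorm2 y by rewrite lt_def ny0 hnorm2_ge0.
pose s := (hnorm2 y)^-1.
have sny : s * hnorm2 y = 1 by rewrite mulVf.
have := hnorm2_ge0 (x - (s%:C * ip x y) *: y); rewrite hnorm2_sub_proj.
have := sqcabs_ge0 (ip x y); have := hnorm2_ge0 x.
move: sny ny_gt0; set n := hnorm2 y; set c := sqcabs _; set m := hnorm2 x.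
move=> sny ny_gt0 m0 c0 h.
have : 0 <= m - s * c by nra.
nra.
Qed.

Lemma cabs_ip_le x y : cabs (ip x y) <= hnorm x * hnorm y.
Proof.
have := CauchySchwarz x y; rewrite -sqr_cabs -!sqr_hnorm -exprMn.
have := mulr_ge0 (hnorm_ge0 x) (hnorm_ge0 y); have := cabs_ge0 (ip x y); nra.
Qed.

Lemma Re_ip_le x y : Re (ip x y) <= hnorm x * hnorm y.
Proof. exact: le_trans (Re_le_cabs _) (cabs_ip_le _ _). Qed.

Lemma hnormD x y : hnorm (x + y) <= hnorm x + hnorm y.
Proof.
have := sqr_hnorm (x + y); rewrite hnorm2D -!sqr_hnorm.
have := Re_ip_le x y; have := hnorm_ge0 (x + y).
have := hnorm_ge0 x; have := hnorm_ge0 y; nra.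
Qed.

Lemma hnormZ a x : hnorm (a *: x) = cabs a * hnorm x.
Proof. by rewrite /hnorm -/(hnorm2 _) hnorm2Z sqrtrM ?sqcabs_ge0 // cabsE. Qed.

Lemma hnormB x y : hnorm (x - y) = hnorm (y - x).
Proof.
rewrite -[x - y]opprB -[- (y - x)]scaleN1r hnormZ cabsE /sqcabs /= oppr0 expr0n addr0 sqrrN.
by rewrite expr1n sqrtr1 mul1r.
Qed.

Lemma ip_eq0_of_min x y : (forall t, hnorm2 x <= hnorm2 (x - t *: y)) -> ip x y = 0.
Proof.
move=> xmin; pose s := (hnorm2 y + 1)^-1.
have s_gt0 : 0 < s by rewrite invr_gt0 ltr_wpDl ?hnorm2_ge0.
have sny : s * hnorm2 y < 1.
  by rewrite -ltr_pdivlMl // invrK mulr1 ltrDl.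
have := xmin (s%:C * ip x y); rewrite hnorm2_sub_proj => h.
apply: sqcabs_eq0; have c0 := sqcabs_ge0 (ip x y).
move: h sny c0; set c := sqcabs _; set n := hnorm2 y => h sny c0.
have scn : s * c * (s * n) <= s * c * 1.
  by apply: ler_wpM2l; [rewrite mulr_ge0 // ltW | exact: ltW].
have sc0 : s * c <= 0 by lra.
by apply/eqP; rewrite eq_le c0 andbT -(pmulr_rle0 _ s_gt0).
Qed.

Lemma hnorm2_le_of_approx x d : 0 <= d ->
  (forall e, 0 < e -> exists v, hnorm2 v <= d + e /\ hnorm (x - v) <= e) ->
  hnorm2 x <= d.
Proof.
move=> d0 approx; apply: (@ler_add_mul_small _ _ _ (2 * d + 6)); first lra.
move=> e e0 e1; have [v [vd xv]] := approx e e0.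
have xle : hnorm x <= hnorm v + e.
  by have := hnormD v (x - v); rewrite [v + _]addrC subrK; lra.
rewrite -sqr_hnorm; rewrite -sqr_hnorm in vd.
have := hnorm_ge0 x; have := hnorm_ge0 v.
move: xle vd; set a := hnorm x; set b := hnorm v => xle vd a0 b0.
have b_le : b <= d + 2 by nra.
have a2 : a ^+ 2 <= (b + e) ^+ 2 by rewrite ler_sqr // ?nnegrE ?addr_ge0 // ltW.
nra.
Qed.

End InnerProduct.

Section RieszRepresentation.
Variables (R : realType) (V : lmodType R[i]) (ip : V -> V -> R[i]).
Hypothesis ipH : is_hilbert ip.
Local Notation hnorm := (hnorm ip).
Local Notation hnorm2 := (hnorm2 ip).

Variables (f : V -> R[i]) (K : R) (x0 : V).
Hypothesis f_linear : forall a x y, f (a *: x + y) = a * f x + f y.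
Hypothesis K_gt0 : 0 < K.
Hypothesis f_bounded : forall x, cabs (f x) <= K * hnorm x.
Hypothesis f_x0 : f x0 != 0.

Let f0 : f 0 = 0.
Proof.
have := f_linear 1 0 0; rewrite scaler0 addr0 mul1r => f00.
by apply: (addrI (f 0)); rewrite addr0 -f00.
Qed.

Let fZ a x : f (a *: x) = a * f x.
Proof. by rewrite -[a *: x]addr0 f_linear f0 addr0. Qed.

Let fD x y : f (x + y) = f x + f y.
Proof. by have := f_linear 1 x y; rewrite scale1r mul1r. Qed.

Let fB x y : f (x - y) = f x - f y.
Proof. by rewrite fD -scaleN1r fZ mulN1r. Qed.

Let sqnorms := [set hnorm2 x | x in [set x | f x = 1]].

Let sqnorms_has_inf : has_inf sqnorms.
Proof.
split; last by exists 0 => _ [y _ <-]; exact: hnorm2_ge0.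
by exists (hnorm2 ((f x0)^-1 *: x0)), ((f x0)^-1 *: x0); rewrite //= fZ mulVf.
Qed.

Let dist2 := inf sqnorms.

Let dist2_le x : f x = 1 -> dist2 <= hnorm2 x.
Proof. by move=> fx; apply: (ge_inf sqnorms_has_inf.2); exists x. Qed.

Let dist2_ge0 : 0 <= dist2.
Proof.
by apply: (lb_le_inf sqnorms_has_inf.1) => _ [y _ <-]; exact: hnorm2_ge0.
Qed.

Let minimizing_seq : exists u : nat -> V, (forall n, f (u n) = 1) /\
  forall e, 0 < e -> exists k, forall n, (k <= n)%N -> hnorm2 (u n) < dist2 + e.
Proof.
have approx n : exists x, f x = 1 /\ hnorm2 x < dist2 + n.+1%:R^-1.
  have n_gt0 : 0 < n.+1%:R^-1 :> R by rewrite invr_gt0.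
  by have [_ [x fx <-] lt_x] := inf_adherent n_gt0 sqnorms_has_inf; exists x.
have [u u_approx] := choice approx; exists u; split=> [n|e e0]; first exact: (u_approx n).1.
have [k ltk] := ltr_add_invr e0; rewrite add0r in ltk; exists k => n kn.
apply: (lt_le_trans (u_approx n).2); rewrite lerD2l (le_trans _ (ltW ltk)) //.
by rewrite lef_pV2 ?posrE ?ltr0n // ler_nat ltnS.
Qed.

Let hnorm2_sub_le x y : f x = 1 -> f y = 1 ->
  hnorm2 (x - y) <= 2 * hnorm2 x + 2 * hnorm2 y - 4 * dist2.
Proof.
move=> fx fy.
have f_mid : f ((2^-1 : R)%:C *: (x + y)) = 1.
  by rewrite fZ fD fx fy; apply: complex_ext => /=; field.
have := dist2_le f_mid; rewrite (hnorm2Z ipH) /sqcabs /=.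
have := parallelogram ipH x y; lra.
Qed.

Let hyperplane_minimizer : exists2 l, f l = 1 & hnorm2 l <= dist2.
Proof.
have [u [fu u_near]] := minimizing_seq.
have u_cauchy e : 0 < e -> exists k, forall m n, (k <= m)%N -> (k <= n)%N ->
    hnorm (u m - u n) < e.
  move=> e0; have e2_gt0 : 0 < e ^+ 2 / 4 by rewrite divr_gt0 ?exprn_gt0.
  have [k near_k] := u_near _ e2_gt0.
  exists k => m n km kn; have := hnorm2_sub_le (fu m) (fu n).
  have := near_k m km; have := near_k n kn => near_n near_m sub_le.
  have : hnorm2 (u m - u n) < e ^+ 2 by lra.
  by rewrite -(sqr_hnorm ipH) ltr_pXn2r // ?nnegrE ?hnorm_ge0 // ltW.
have [l u_cvg] := ip_complete ipH u_cauchy.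
exists l.
  apply/eqP; rewrite -subr_eq0; apply/eqP/cabs_eq0/eqP.
  rewrite eq_le cabs_ge0 andbT; apply/ler_addgt0Pr => e e0; rewrite add0r.
  have [k uk] := u_cvg (e / K) (divr_gt0 e0 K_gt0).
  rewrite -(fu k) -fB; apply: le_trans (f_bounded _) _.
  rewrite (hnormB ipH) -ler_pdivlMl // mulrC; exact/ltW/uk.
apply: (hnorm2_le_of_approx ipH dist2_ge0) => e e0.
have [k1 near_k1] := u_near e e0; have [k2 cvg_k2] := u_cvg e e0.
exists (u (maxn k1 k2)); split; first by rewrite ltW // near_k1 // leq_maxl.
by rewrite (hnormB ipH) ltW // cvg_k2 // leq_maxr.
Qed.

Lemma riesz_nontrivial : exists z, forall x, f x = ip x z.
Proof.
have [l fl l_min] := hyperplane_minimizer.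
have l_orth k : f k = 0 -> ip l k = 0.
  move=> fk; apply: (ip_eq0_of_min ipH) => t.
  by apply: le_trans l_min (dist2_le _); rewrite fB fZ fk mulr0 subr0.
have l0 : (hnorm2 l)%:C != 0.
  apply/eqP => /(congr1 Re) /= /(hnorm2_eq0 ipH) l0.
  by move: fl; rewrite l0 f0 => /esym/eqP; rewrite oner_eq0.
exists (((hnorm2 l)%:C)^-1 *: l) => x.
have := l_orth (x - f x *: l); rewrite fB fZ fl mulr1 subrr => /(_ erefl).
move=> /(congr1 conjc); rewrite -(ipC ipH) conjc0 (ipBl ipH) (ipZl ipH) (ip_self ipH).
move=> /eqP; rewrite subr_eq0 => /eqP ip_xl.
by rewrite (ipZr ipH) ip_xl conjc_inv conjc_real mulrC mulfK.
Qed.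

End RieszRepresentation.

Section Adjoint.
Variables (R : realType) (V : lmodType R[i]) (ip : V -> V -> R[i]).
Hypothesis ipH : is_hilbert ip.
Local Notation hnorm := (hnorm ip).
Local Notation bounded_linear := (bounded_linear ip).
Local Notation adjoint := (adjoint ip).
Local Notation ReOp := (ReOp ip).
Local Notation opzero := (@opzero R V).

Lemma riesz (f : V -> R[i]) : (forall a x y, f (a *: x + y) = a * f x + f y) ->
  (exists M, forall x, cabs (f x) <= M * hnorm x) -> exists z, forall x, f x = ip x z.
Proof.
move=> f_linear [M f_bounded].
have [f0|/existsNP[x0 /eqP fx0]] := pselect (forall x, f x = 0).
  by exists 0 => x; rewrite f0 (ip0r ipH).
have K_gt0 : 0 < `|M| + 1 by rewrite ltr_wpDl.
apply: (riesz_nontrivial ipH f_linear K_gt0 _ fx0) => x.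
apply: le_trans (f_bounded x) _; apply: ler_wpM2r; first exact: hnorm_ge0.
by rewrite (le_trans (ler_norm M)) ?lerDl.
Qed.
Lemma bounded_linear_bound T : bounded_linear T ->
  exists2 M, 0 <= M & forall x, hnorm (T x) <= M * hnorm x.
Proof.
move=> [_ [M T_bounded]]; exists `|M|; first exact: normr_ge0.
move=> x; apply: le_trans (T_bounded x) _.
by apply: ler_wpM2r; [exact: hnorm_ge0 | exact: ler_norm].
Qed.

Lemma adjointP T : bounded_linear T -> forall x y, ip (T x) y = ip x (adjoint T y).
Proof.
move=> T_bl; apply: (epsilon_spec (inhabits T) (fun S => forall x y, ip (T x) y = ip x (S y))).
have [M M0 T_bounded] := bounded_linear_bound T_bl; have [T_linear _] := T_bl.
have : forall y, exists z, forall x, ip (T x) y = ip x z.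
  move=> y; apply: riesz => [a x x'|]; first by rewrite T_linear (ipDl ipH) (ipZl ipH).
  exists (M * hnorm y) => x; apply: le_trans (cabs_ip_le ipH _ _) _.
  by rewrite mulrAC; apply: ler_wpM2r; [exact: hnorm_ge0 | exact: T_bounded].
by move=> /choice[S TS]; exists S => x y; exact: TS.
Qed.

Lemma adjoint_unique T S : bounded_linear T ->
  (forall x y, ip (T x) y = ip x (S y)) -> adjoint T = S.
Proof.
move=> T_bl TS; apply: funext => y; apply: (ip_ext ipH) => z.
by rewrite -adjointP.
Qed.

Lemma bounded_linear_add T S : bounded_linear T -> bounded_linear S ->
  bounded_linear (opadd T S).
Proof.
move=> T_bl S_bl; have [M1 _ T_bounded] := bounded_linear_bound T_bl.
have [M2 _ S_bounded] := bounded_linear_bound S_bl.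
have [T_linear _] := T_bl; have [S_linear _] := S_bl.
split=> [a x y|]; first by rewrite /opadd T_linear S_linear scalerDr addrACA.
exists (M1 + M2) => x; rewrite /opadd mulrDl.
by apply: le_trans (hnormD ipH _ _) _; apply: lerD.
Qed.

Lemma bounded_linear_scale a T : bounded_linear T -> bounded_linear (opscale a T).
Proof.
move=> T_bl; have [M _ T_bounded] := bounded_linear_bound T_bl; have [T_linear _] := T_bl.
split=> [b x y|]; first by rewrite /opscale T_linear scalerDr !scalerA mulrC.
exists (cabs a * M) => x; rewrite /opscale (hnormZ ipH) -mulrA.
by apply: ler_wpM2l; [exact: cabs_ge0 | exact: T_bounded].
Qed.

Lemma bounded_linear_adjoint T : bounded_linear T -> bounded_linear (adjoint T).
Proof.
move=> T_bl; have [M M0 T_bounded] := bounded_linear_bound T_bl.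
split=> [a y y'|].
  apply: (ip_ext ipH) => z.
  by rewrite -adjointP // !(ipDr ipH, ipZr ipH) -!adjointP.
exists M => y; set p := hnorm (adjoint T y).
have p_le : p ^+ 2 <= M * hnorm y * p.
  rewrite (sqr_hnorm ipH) /hnorm2 -adjointP // mulrAC.
  apply: le_trans (Re_ip_le ipH _ _) _.
  by apply: ler_wpM2r; [exact: hnorm_ge0 | exact: T_bounded].
have := mulr_ge0 M0 (hnorm_ge0 ip y); have := hnorm_ge0 ip (adjoint T y); rewrite -/p; nra.
Qed.

Lemma adjointD T S : bounded_linear T -> bounded_linear S ->
  adjoint (opadd T S) = opadd (adjoint T) (adjoint S).
Proof.
move=> T_bl S_bl; apply: adjoint_unique; first exact: bounded_linear_add.
by move=> x y; rewrite /opadd (ipDl ipH) (ipDr ipH) !adjointP.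
Qed.

Lemma adjointZ a T : bounded_linear T -> adjoint (opscale a T) = opscale a^* (adjoint T).
Proof.
move=> T_bl; apply: adjoint_unique; first exact: bounded_linear_scale.
by move=> x y; rewrite /opscale (ipZl ipH) (ipZr ipH) conjcK adjointP.
Qed.

Lemma bounded_linear_ReOp T : bounded_linear T -> bounded_linear (ReOp T).
Proof.
move=> T_bl; apply: bounded_linear_scale; apply: bounded_linear_add => //.
exact: bounded_linear_adjoint.
Qed.

Lemma ReOpD T S : bounded_linear T -> bounded_linear S ->
  ReOp (opadd T S) = opadd (ReOp T) (ReOp S).
Proof.
move=> T_bl S_bl; rewrite /ReOp adjointD //; apply: funext => x.
by rewrite /opscale /opadd -scalerDr addrACA.
Qed.

Lemma ReOpZ_real (r : R) T : bounded_linear T ->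
  ReOp (opscale r%:C T) = opscale r%:C (ReOp T).
Proof.
move=> T_bl; rewrite /ReOp adjointZ // conjc_real; apply: funext => x.
by rewrite /opscale /opadd -scalerDr !scalerA mulrC.
Qed.

Lemma ReOp_eq0 Y : bounded_linear Y ->
  ReOp Y = opzero -> ReOp (opscale 'i Y) = opzero -> Y = opzero.
Proof.
move=> Y_bl ReY ReiY; apply: funext => x.
have half_neq0 : (2^-1 : R[i]) != 0 by rewrite invr_eq0 pnatr_eq0.
have i_neq0 : 'i != 0 :> R[i] by apply/eqP => /(congr1 Im) /= /eqP; rewrite oner_eq0.
have i_conj : 'i^* = - 'i :> R[i] by apply: complex_ext; rewrite /= ?oppr0.
move: (congr1 (fun T => T x) ReY) (congr1 (fun T => T x) ReiY).
rewrite /ReOp adjointZ // /opscale /opadd /opzero i_conj scaleNr -scalerBr.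
move=> /eqP; rewrite scaler_eq0 (negbTE half_neq0) => /eqP sum0.
move=> /eqP; rewrite !scaler_eq0 (negbTE half_neq0) (negbTE i_neq0) => /eqP diff0.
have : (Y x + adjoint Y x) + (Y x - adjoint Y x) = Y x *+ 2.
  by rewrite addrACA subrr addr0 mulr2n.
rewrite sum0 diff0 addr0 => /esym/eqP; rewrite -scaler_nat scaler_eq0 pnatr_eq0.
by move/eqP.
Qed.

End Adjoint.

Section WNorm.
Variables (R : realType) (V : lmodType R[i]) (ip : V -> V -> R[i]) (N : (V -> V) -> R).
Hypotheses (ipH : is_hilbert ip) (NH : is_norm_BH ip N).
Local Notation bounded_linear := (bounded_linear ip).
Local Notation adjoint := (adjoint ip).
Local Notation ReOp := (ReOp ip).
Local Notation opzero := (@opzero R V).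
Local Notation ball l1 l2 := (cabs l1 ^+ 2 + cabs l2 ^+ 2 <= 1).

Definition rot_comb (l1 l2 : R[i]) (B C : V -> V) (t : R) :=
  opscale (expi t) (opadd (opscale l1 B) (opscale l2 C)).

Let N_ge0 T : bounded_linear T -> 0 <= N T.
Proof. by case: NH => + _ _ _; apply. Qed.

Let N_eq0 T : bounded_linear T -> N T = 0 -> T = opzero.
Proof. by case: NH => _ + _ _; apply. Qed.

Let NZ a T : bounded_linear T -> N (opscale a T) = cabs a * N T.
Proof. by case: NH => _ _ + _; apply. Qed.

Let ND T S : bounded_linear T -> bounded_linear S -> N (opadd T S) <= N T + N S.
Proof. by case: NH => _ _ _; apply. Qed.

Lemma bounded_linear_rot_comb l1 l2 B C t : bounded_linear B -> bounded_linear C ->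
  bounded_linear (rot_comb l1 l2 B C t).
Proof.
by move=> B_bl C_bl; do !(apply: (bounded_linear_scale ipH) || apply: (bounded_linear_add ipH)).
Qed.

Let N_unit_comb_le e l1 l2 B C : bounded_linear B -> bounded_linear C ->
  cabs e = 1 -> cabs l1 <= 1 -> cabs l2 <= 1 ->
  N (opscale e (opadd (opscale l1 B) (opscale l2 C))) <= N B + N C.
Proof.
move=> B_bl C_bl e1 l1_le l2_le.
have lB_bl := bounded_linear_scale ipH l1 B_bl; have lC_bl := bounded_linear_scale ipH l2 C_bl.
rewrite NZ ?e1 ?mul1r; last exact: (bounded_linear_add ipH).
apply: le_trans (ND lB_bl lC_bl) _; rewrite !NZ //.
by apply: lerD; rewrite -[leRHS]mul1r ler_wpM2r ?N_ge0.
Qed.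

Let N_ReOp_le T : bounded_linear T -> N (ReOp T) <= cabs (2^-1 : R[i]) * (N T + N (adjoint T)).
Proof.
move=> T_bl; have T'_bl := bounded_linear_adjoint ipH T_bl.
rewrite NZ; last exact: (bounded_linear_add ipH).
by apply: ler_wpM2l; [exact: cabs_ge0 | exact: ND].
Qed.

Let rot_comb_bound B C := cabs (2^-1 : R[i]) * (N B + N C + (N (adjoint B) + N (adjoint C))).

Let N_ReOp_rot_comb_le_bound l1 l2 B C t : bounded_linear B -> bounded_linear C ->
  ball l1 l2 -> N (ReOp (rot_comb l1 l2 B C t)) <= rot_comb_bound B C.
Proof.
move=> B_bl C_bl /cabs_ball_le1[l1_le l2_le].
apply: le_trans (N_ReOp_le (bounded_linear_rot_comb _ _ _ B_bl C_bl)) _.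
apply: ler_wpM2l; first exact: cabs_ge0.
apply: lerD; first exact: N_unit_comb_le (cabs_expi t) l1_le l2_le.
have [lB_bl lC_bl] := (bounded_linear_scale ipH l1 B_bl, bounded_linear_scale ipH l2 C_bl).
have lBC_bl := bounded_linear_add ipH lB_bl lC_bl.
rewrite /rot_comb (adjointZ ipH) // (adjointD ipH) // !(adjointZ ipH) //.
by apply: N_unit_comb_le; rewrite ?cabs_conj ?cabs_expi //; exact: (bounded_linear_adjoint ipH).
Qed.

Let ball00 : ball (0 : R[i]) 0.
Proof. by rewrite cabs0 expr0n addr0 ler01. Qed.

Lemma theta_set_has_sup l1 l2 B C : bounded_linear B -> bounded_linear C ->
  ball l1 l2 -> has_sup (theta_set ip N l1 l2 B C).
Proof.
move=> B_bl C_bl l_ball; split; first by exists (N (ReOp (rot_comb l1 l2 B C 0))), 0.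
by exists (rot_comb_bound B C) => _ [t _ <-]; exact: N_ReOp_rot_comb_le_bound.
Qed.

Lemma lambda_set_has_sup B C : bounded_linear B -> bounded_linear C ->
  has_sup (lambda_set ip N B C).
Proof.
move=> B_bl C_bl; split; first by exists (sup (theta_set ip N 0 0 B C)), 0, 0.
exists (rot_comb_bound B C) => _ [l1 [l2 [l_ball ->]]].
apply: ge_sup; first by exists (N (ReOp (rot_comb l1 l2 B C 0))), 0.
by move=> _ [t _ <-]; exact: N_ReOp_rot_comb_le_bound.
Qed.

Lemma N_ReOp_rot_comb_le l1 l2 B C t : bounded_linear B -> bounded_linear C ->
  ball l1 l2 -> N (ReOp (rot_comb l1 l2 B C t)) <= wNe ip N B C.
Proof.
move=> B_bl C_bl l_ball; apply: le_trans (_ : _ <= sup (theta_set ip N l1 l2 B C)) _.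
  by apply: sup_upper_bound; [exact: theta_set_has_sup | exists t].
by apply: sup_upper_bound; [exact: lambda_set_has_sup | exists l1, l2].
Qed.

Lemma wNe_le c B C : bounded_linear B -> bounded_linear C ->
  (forall l1 l2 t, ball l1 l2 -> N (ReOp (rot_comb l1 l2 B C t)) <= c) -> wNe ip N B C <= c.
Proof.
move=> B_bl C_bl le_c; apply: ge_sup; first by exists (sup (theta_set ip N 0 0 B C)), 0, 0.
move=> _ [l1 [l2 [l_ball ->]]].
apply: ge_sup; first by exists (N (ReOp (rot_comb l1 l2 B C 0))), 0.
by move=> _ [t _ <-]; exact: le_c.
Qed.

Lemma wNe_ge0 B C : bounded_linear B -> bounded_linear C -> 0 <= wNe ip N B C.
Proof.
move=> B_bl C_bl; apply: le_trans (N_ReOp_rot_comb_le 0 B_bl C_bl ball00).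
by apply/N_ge0/(bounded_linear_ReOp ipH)/bounded_linear_rot_comb.
Qed.

Lemma wNe_eq0 B C : bounded_linear B -> bounded_linear C ->
  wNe ip N B C = 0 -> B = opzero /\ C = opzero.
Proof.
move=> B_bl C_bl w0.
have Re_rot_eq0 l1 l2 t : ball l1 l2 -> ReOp (rot_comb l1 l2 B C t) = opzero.
  move=> l_ball; apply: N_eq0.
    by apply/(bounded_linear_ReOp ipH)/bounded_linear_rot_comb.
  apply/eqP; rewrite eq_le N_ge0 ?andbT.
    by rewrite -w0 N_ReOp_rot_comb_le.
  by apply/(bounded_linear_ReOp ipH)/bounded_linear_rot_comb.
have expi0 : expi 0 = 1 :> R[i] by rewrite /expi cos0 sin0.
have expi_pihalf : expi (pi / 2) = 'i :> R[i] by rewrite /expi cos_pihalf sin_pihalf.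
have scale1 T : opscale 1 T = T by apply: funext => x; rewrite /opscale scale1r.
have rot10 t : rot_comb 1 0 B C t = opscale (expi t) B.
  by apply: funext => x; rewrite /rot_comb /opscale /opadd scale1r scale0r addr0.
have rot01 t : rot_comb 0 1 B C t = opscale (expi t) C.
  by apply: funext => x; rewrite /rot_comb /opscale /opadd scale1r scale0r add0r.
have ball10 : ball (1 : R[i]) 0 by rewrite cabs0 cabs1 expr0n addr0 expr1n.
have ball01 : ball (0 : R[i]) 1 by rewrite cabs0 cabs1 expr0n add0r expr1n.
split; apply: (ReOp_eq0 ipH) => //.
- by rewrite -[B]scale1 -expi0 -rot10 Re_rot_eq0.
- by rewrite -expi_pihalf -rot10 Re_rot_eq0.
- by rewrite -[C]scale1 -expi0 -rot01 Re_rot_eq0.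
- by rewrite -expi_pihalf -rot01 Re_rot_eq0.
Qed.

Lemma wNeD B1 C1 B2 C2 : bounded_linear B1 -> bounded_linear C1 ->
  bounded_linear B2 -> bounded_linear C2 ->
  wNe ip N (opadd B1 B2) (opadd C1 C2) <= wNe ip N B1 C1 + wNe ip N B2 C2.
Proof.
move=> B1_bl C1_bl B2_bl C2_bl.
have B_bl := bounded_linear_add ipH B1_bl B2_bl; have C_bl := bounded_linear_add ipH C1_bl C2_bl.
apply: wNe_le => // l1 l2 t l_ball.
have -> : rot_comb l1 l2 (opadd B1 B2) (opadd C1 C2) t =
    opadd (rot_comb l1 l2 B1 C1 t) (rot_comb l1 l2 B2 C2 t).
  by apply: funext => x; rewrite /rot_comb /opscale /opadd !scalerDr addrACA.
have rot1_bl := bounded_linear_rot_comb l1 l2 t B1_bl C1_bl.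
have rot2_bl := bounded_linear_rot_comb l1 l2 t B2_bl C2_bl.
rewrite (ReOpD ipH) //; apply: le_trans (ND _ _) _; try exact: (bounded_linear_ReOp ipH).
by apply: lerD; exact: N_ReOp_rot_comb_le.
Qed.

Lemma wNeZ_le a B C : bounded_linear B -> bounded_linear C ->
  wNe ip N (opscale a B) (opscale a C) <= cabs a * wNe ip N B C.
Proof.
move=> B_bl C_bl; have [u u1 a_polar] := polar_decomp a.
have aB_bl := bounded_linear_scale ipH a B_bl; have aC_bl := bounded_linear_scale ipH a C_bl.
apply: wNe_le => // l1 l2 t l_ball; set r := cabs a in a_polar *.
have -> : rot_comb l1 l2 (opscale a B) (opscale a C) t =
    opscale r%:C (rot_comb (l1 * u) (l2 * u) B C t).
  apply: funext => x; rewrite /rot_comb /opscale /opadd a_polar !scalerDr !scalerA.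
  by congr (_ *: _ + _ *: _); ring.
have rot_bl := bounded_linear_rot_comb (l1 * u) (l2 * u) t B_bl C_bl.
rewrite (ReOpZ_real ipH) // NZ ?cabs_real; [|exact: cabs_ge0|exact: (bounded_linear_ReOp ipH)].
apply: ler_wpM2l; first exact: cabs_ge0.
by apply: N_ReOp_rot_comb_le; rewrite // !cabsM u1 !mulr1.
Qed.

Lemma wNeZ a B C : bounded_linear B -> bounded_linear C ->
  wNe ip N (opscale a B) (opscale a C) = cabs a * wNe ip N B C.
Proof.
move=> B_bl C_bl; apply/eqP; rewrite eq_le wNeZ_le //=.
have [->|a0] := eqVneq a 0.
  by rewrite cabs0 mul0r; apply: wNe_ge0; exact: (bounded_linear_scale ipH).
have a_gt0 : 0 < cabs a by rewrite lt_def cabs_ge0 andbT; apply: contra_neq a0 => /cabs_eq0.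
have scaleK T : opscale a^-1 (opscale a T) = T.
  by apply: funext => x; rewrite /opscale scalerA mulVf // scale1r.
have aB_bl := bounded_linear_scale ipH a B_bl; have aC_bl := bounded_linear_scale ipH a C_bl.
by rewrite -ler_pdivlMl // -cabsV; have := wNeZ_le a^-1 aB_bl aC_bl; rewrite !scaleK.
Qed.

End WNorm.

Unset Implicit Arguments.

Theorem theorem2p2 (R : realType) (V : lmodType R[i]) (ip : V -> V -> R[i])
  (N : (V -> V) -> R) :
  is_hilbert ip -> is_norm_BH ip N ->
  (forall B C : V -> V, bounded_linear ip B -> bounded_linear ip C ->
     (forall l1 l2 : R[i], cabs l1 ^+ 2 + cabs l2 ^+ 2 <= 1 ->
        has_sup (theta_set ip N l1 l2 B C)) /\
     has_sup (lambda_set ip N B C)) /\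
  is_norm_BH2 ip N (wNe ip N).
Proof.
move=> ipH NH; split=> [B C B_bl C_bl|].
  split=> [l1 l2|]; [exact: theta_set_has_sup | exact: lambda_set_has_sup].
split=> [B C|B C|a B C|B1 C1 B2 C2].
- exact: wNe_ge0.
- exact: wNe_eq0.
- exact: wNeZ.
- exact: wNeD.
Qed.
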